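(* Consider a D2D caching network with $K$ users each of cache size $M$ files, of which $S$ are selfish, a library of $N$ files, and $\frac{M(K-S)}{N}>1$, using the random caching scheme described in the context. Then every request vector $(\mathsf{r}_1,\dots,\mathsf{r}_K)$ is recoverable by the users if all library files are encoded with an MDS code of rate $r$, where $r\in(0,1)$ is a real positive root of the polynomial $$\sum_{i=0}^{K-S-1}\binom{K-S}{i}\Big(-\frac{M}{N}\Big)^{K-S-i}r^{K-S-1-i}+1 .$$
   Context: Selfish users cache content like all other users but never transmit; all users receive all transmissions. Random caching scheme: each of the $N$ library files of $B$ bits is divided into $I$ subfiles of $B/I$ bits, each regarded as a symbol of $\mathbb{F}_{2^{B/I}}$, and each file is encoded with an $(I, I/r)$ MDS code over $\mathbb{F}_{2^{B/I}}$ (codeword length $I/r$; any $I$ encoded symbols recover the file). Each user independently, for each file, selects uniformly at random $MI/N$ of the $I/r$ encoded-symbol indices and caches those symbols, so a given encoded symbol is cached by a given user with probability $Mr/N$. At the end of the delivery phase each user knows every encoded symbol of its requested file that is cached by itself or by at least one non-selfish user; the number of encoded symbols of a file cached exclusively by a given set $\mathcal{P}$ of users is taken to be its typical value $(\frac{Mr}{N})^{|\mathcal{P}|}(1-\frac{Mr}{N})^{K-|\mathcal{P}|}\frac{I}{r}$ (law of large numbers, large $I$). A file is recoverable by a user if the user knows at least $I$ of its encoded symbols. *)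

From HB Require Import structures.
From mathcomp Require Import all_boot all_order all_algebra.
Set Implicit Arguments. Unset Strict Implicit. Unset Printing Implicit Defensive.
Import Order.TTheory GRing.Theory Num.Theory.
Local Open Scope ring_scope.

(* Users are 'I_K, files are 'I_N, Sset is the set of selfish users.
   Each file is split into I subfiles and encoded into I/r symbols; a given
   symbol is cached by a given user with probability p = M r / N. *)

(* Typical number of encoded symbols of a file cached exclusively by a given
   set of users of cardinality n:  p^n (1-p)^(K-n) * I/r. *)
Definition typical_count (R : realFieldType) (K I : nat) (p r : R) (n : nat) : R :=
  p ^+ n * (1 - p) ^+ (K - n) * (I%:R / r).

(* Number of encoded symbols of file f known by user k at the end of the
   delivery phase: those cached by k itself or by at least one non-selfish
   user, i.e. the sum over all user sets P containing k or containing a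
   non-selfish user of the typical exclusive count. *)
Definition known_symbols (R : realFieldType) (K N I : nat) (Sset : {set 'I_K})
    (M r : R) (k : 'I_K) (f : 'I_N) : R :=
  \sum_(P : {set 'I_K} | (k \in P) || [exists j in P, j \notin Sset])
     @typical_count R K I (M * r / N%:R) r #|P|.

Definition recoverable (R : realFieldType) (K N I : nat) (Sset : {set 'I_K})
    (M r : R) (f : 'I_N) (k : 'I_K) : Prop :=
  I%:R <= @known_symbols R K N I Sset M r k f.

Definition request_recoverable (R : realFieldType) (K N I : nat)
    (Sset : {set 'I_K}) (M r : R) (req : 'I_K -> 'I_N) : Prop :=
  forall k : 'I_K, @recoverable R K N I Sset M r (req k) k.

Definition rate_poly (R : realFieldType) (K S N : nat) (M r : R) : R :=
  \sum_(i < K - S) ('C(K - S, i))%:R * (- (M / N%:R)) ^+ (K - S - i)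
       * r ^+ (K - S - 1 - i) + 1.

(* With p = M r / N, the exclusive-caching weights p^|P| (1-p)^(K-|P|) sum
   like a binomial distribution over user sets.  User k misses exactly the
   symbols cached by no user outside Sset :\ k, a fraction
   (1-p)^(K - |Sset :\ k|) of the I/r symbols.  Multiplying the polynomial by r
   turns its roots into the solutions of (1-p)^(K-S) = 1 - r; since
   |Sset :\ k| <= S and |1-p| <= 1, the missed fraction is at most 1 - r, so k
   knows at least r * I/r = I symbols. *)

From HB Require Import structures.
From mathcomp Require Import all_boot all_order all_algebra.
From mathcomp Require Import zify lra.
Import Order.TTheory GRing.Theory Num.Theory.
Local Open Scope ring_scope.

Section SubsetWeights.
Context {R : comPzRingType} {T : finType}.

Lemma prod_if_in_set (p q : R) (J : {set T}) :
  \prod_i (if i \in J then p else q) = p ^+ #|J| * q ^+ (#|T| - #|J|).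
Proof.
rewrite -(cardsC J) addKn (bigID [in J]) /=.
rewrite (eq_bigr (fun=> p)) => [|i ->] //.
rewrite [X in _ * X](eq_bigr (fun=> q)) => [|i /negbTE ->] //.
by rewrite !prodr_const; congr (_ * _ ^+ _); apply: eq_card => i; rewrite inE.
Qed.

(* Expand \prod_i ((i \in A ? p : 0) + q): the subsets not inside A vanish. *)
Lemma sum_subset_weights (p q : R) (A : {set T}) :
  \sum_(P : {set T} | P \subset A) p ^+ #|P| * q ^+ (#|T| - #|P|)
  = (p + q) ^+ #|A| * q ^+ (#|T| - #|A|).
Proof.
pose F i := if i \in A then p else 0.
have := bigA_distr 1 +%R F (fun=> q).
have -> : \prod_i (F i + q) = \prod_i (if i \in A then p + q else q).
  by apply: eq_bigr => i _; rewrite /F; case: (i \in A); rewrite ?add0r.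
rewrite prod_if_in_set => ->.
rewrite [RHS](bigID (fun P : {set T} => P \subset A)) /= [X in _ + X]big1 ?addr0.
  apply: eq_bigr => P sPA; rewrite -prod_if_in_set; apply: eq_bigr => i _.
  by rewrite /F; case: ifP => // iP; rewrite (subsetP sPA).
move=> P /subsetPn[i iP iA].
by rewrite (bigD1 i) //= iP /F (negbTE iA) mul0r.
Qed.

Lemma sum_not_subset_weights (p q : R) (A : {set T}) : p + q = 1 ->
  \sum_(P : {set T} | ~~ (P \subset A)) p ^+ #|P| * q ^+ (#|T| - #|P|)
  = 1 - q ^+ (#|T| - #|A|).
Proof.
move=> pq1.
have total : \sum_(P : {set T}) p ^+ #|P| * q ^+ (#|T| - #|P|) = 1.
  have := sum_subset_weights p q setT.
  rewrite pq1 cardsT subnn expr1n expr0 mulr1 => <-.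
  by apply: eq_bigl => P; rewrite subsetT.
rewrite -total [in RHS](bigID (fun P : {set T} => P \subset A)) /=.
by rewrite sum_subset_weights pq1 expr1n mul1r addrAC subrr add0r.
Qed.

End SubsetWeights.

Lemma mem_or_exists_notinE (T : finType) (S P : {set T}) (k : T) :
  (k \in P) || [exists j in P, j \notin S] = ~~ (P \subset S :\ k).
Proof.
apply/idP/subsetPn => [/orP[kP | /exists_inP[j jP jS]] | [j jP]].
- by exists k; rewrite // !inE eqxx.
- by exists j; rewrite // !inE (negbTE jS) andbF.
rewrite !inE negb_and negbK => /orP[/eqP <- | jS]; first by rewrite jP.
by apply/orP; right; apply/exists_inP; exists j.
Qed.

Lemma known_symbolsE (R : realFieldType) (K N I : nat) (Sset : {set 'I_K})
    (M r : R) (k : 'I_K) (f : 'I_N) :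
  known_symbols I Sset M r k f
  = (1 - (1 - M * r / N%:R) ^+ (K - #|Sset :\ k|)) * (I%:R / r).
Proof.
rewrite /known_symbols /typical_count -big_distrl /=.
under eq_bigl do rewrite mem_or_exists_notinE.
have := sum_not_subset_weights (M * r / N%:R) (1 - M * r / N%:R) (Sset :\ k).
by rewrite card_ord addrC subrK => ->.
Qed.

Lemma mulr_rate_poly (R : realFieldType) (K S N : nat) (M r : R) :
  r * rate_poly K S N M r = (1 - M * r / N%:R) ^+ (K - S) - (1 - r).
Proof.
rewrite /rate_poly; set n := (K - S)%N.
rewrite [1 - _]addrC exprDn big_ord_recr /= subnn expr0 expr1n mul1r binn.
rewrite mulrDr mulr1 big_distrr /= opprB addrA addrAC addrK; congr (_ + _).
apply: eq_bigr => i _; rewrite expr1n mulr1 mulrCA -exprS.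
have -> : (n - 1 - i).+1 = (n - i)%N by have := ltn_ord i; lia.
by rewrite mulr_natl mulrnAl -exprMn mulNr mulrAC.
Qed.

Lemma ler_exprn_le1 (R : realDomainType) (x : R) (m n : nat) :
  (0 < n)%N -> (n <= m)%N -> 0 <= x ^+ n <= 1 -> x ^+ m <= x ^+ n.
Proof.
move=> n_gt0 le_nm /andP[xn_ge0 xn_le1].
have xnE : x ^+ n = `|x| ^+ n by rewrite -normrX ger0_norm.
have x_le1 : `|x| <= 1 by rewrite -(expr_le1 n_gt0) // -xnE.
rewrite xnE; apply: le_trans (ler_norm _) _.
by rewrite normrX ler_wiXn2l.
Qed.

Theorem theorem3 (R : realFieldType) (K S N I : nat) (M r : R)
    (Sset : {set 'I_K}) :
  #|Sset| = S ->
  (0 < N)%N ->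
  (0 < I)%N ->
  1 < M * (K - S)%:R / N%:R ->
  0 < r < 1 ->
  @rate_poly R K S N M r = 0 ->
  forall req : 'I_K -> 'I_N, @request_recoverable R K N I Sset M r req.
Proof.
move=> cardS _ _ hM /andP[r_gt0 r_lt1] root req k.
rewrite /recoverable known_symbolsE.
set q := 1 - M * r / N%:R.
have n_gt0 : (0 < K - S)%N.
  by rewrite lt0n; apply: contraTneq hM => ->; rewrite mulr0 mul0r ltr10.
have qn : q ^+ (K - S) = 1 - r.
  by apply/eqP; rewrite -subr_eq0 -mulr_rate_poly root mulr0.
have le_n : (K - S <= K - #|Sset :\ k|)%N.
  by rewrite -cardS leq_sub2l // subset_leq_card // subD1set.
have qm : q ^+ (K - #|Sset :\ k|) <= 1 - r.
  by rewrite -qn ler_exprn_le1 // qn subr_ge0 lerBlDr lerDl !ltW.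
rewrite -{1}(divfK (lt0r_neq0 r_gt0) I%:R) mulrC.
rewrite ler_wpM2r ?divr_ge0 ?ler0n ?(ltW r_gt0) //; lra.
Qed.
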